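(* Let $n\ge2$ and let $X_1,\dots,X_n$ be operators in a complex Hilbert space $\mathcal{H}$, each Hermitian or skew-Hermitian, defined on a common invariant domain $D$. Let $m^{(1)},\dots,m^{(n)}$ be sequences of positive numbers satisfying (A0), (A1), (A2). Suppose that for every $j\in\{1,\dots,n-1\}$ the pair $(m^{(j)},m^{(n)})$ satisfies (A3) and $[X_j,X_n]=c_jI$ on $D$ for some $c_j\in\mathbb{C}$. Put $\mathbf{X}=(X_1,\dots,X_n)$, $\mathbf{X}'=(X_1,\dots,X_{n-1})$, $\mathbf{m}=(m^{(1)},\dots,m^{(n)})$, $\mathbf{m}'=(m^{(1)},\dots,m^{(n-1)})$. Then $u\in D$ belongs to $\mathcal{S}_{\mathbf{m}}(\mathbf{X})$ if and only if $u\in\mathcal{S}_{\mathbf{m}'}(\mathbf{X}')\cap\mathcal{S}_{m^{(n)}}(X_n)$.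
   Context: A common invariant domain $D$ means $D\subset\mathrm{Dom}(X_j)$ and $X_jD\subset D$ for all $j$. Notation: for $N\ge1$, $M(N)=\bigcup_{k\ge1}\{1,\dots,N\}^k$; for $\alpha=(i_1,\dots,i_k)\in M(N)$, $|\alpha|=k$, $|\alpha|_j=\mathrm{card}\{l: i_l=j\}$. For operators $\mathbf{Y}=(Y_1,\dots,Y_N)$, $\mathbf{Y}_\alpha=Y_{i_1}\cdots Y_{i_k}$ and $C^\infty(\mathbf{Y})=\{u: u\in\mathrm{Dom}(\mathbf{Y}_\alpha)\ \forall\alpha\in M(N)\}$. For sequences $\mathbf{p}=(p^{(1)},\dots,p^{(N)})$ of positive reals, $\mathbf{p}_\alpha=p^{(1)}_{|\alpha|_1}\cdots p^{(N)}_{|\alpha|_N}$ and $\mathcal{S}_{\mathbf{p}}(\mathbf{Y})=\{u\in C^\infty(\mathbf{Y}): \exists A,C>0,\ \|\mathbf{Y}_\alpha u\|\le CA^{|\alpha|}\mathbf{p}_\alpha\ \forall\alpha\in M(N)\}$ (for $N=1$: $\|Y^ku\|\le CA^kp_k$ for all $k\ge1$). Conditions: (A0) $m^{(j)}_0=m^{(j)}_1=1$; (A1) $(m^{(j)}_p)^2\le m^{(j)}_{p-1}m^{(j)}_{p+1}$ for $p\ge1$; (A2) there is $H>0$ with $m^{(j)}_{p+q}\le H^{p+q}m^{(j)}_pm^{(j)}_q$ for all $j$, $p,q\in\mathbb{N}$. A pair $(m^{(j)},m^{(k)})$ satisfies (A3) if there is $L\ge1$ with $p\,m^{(j)}_{p-1}m^{(k)}_{p-1}\le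 L\,m^{(j)}_pm^{(k)}_p$ for all $p\ge1$. *)

From HB Require Import structures.
From mathcomp Require Import all_boot all_order all_algebra.
From mathcomp Require Import classical_sets reals.
From mathcomp Require Import complex.
Set Implicit Arguments. Unset Strict Implicit. Unset Printing Implicit Defensive.
Import Order.TTheory GRing.Theory Num.Theory.
Local Open Scope ring_scope.
Local Open Scope complex_scope.

Record inner_product (R : realType) (V : lmodType R[i]) := InnerProduct {
  ip :> V -> V -> R[i];
  ip_linl : forall (a : R[i]) (u v w : V), ip (a *: u + v) w = a * ip u w + ip v w;
  ip_conj : forall u v : V, ip u v = conjc (ip v u);
  ip_ge0 : forall u : V, 0 <= ip u u;
  ip_eq0 : forall u : V, ip u u = 0 -> u = 0 }.

Definition hnorm (R : realType) (V : lmodType R[i]) (ip : inner_product V) (u : V) : R :=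
  Num.sqrt (complex.Re (ip u u)).

Definition hilbert_complete (R : realType) (V : lmodType R[i]) (ip : inner_product V) :=
  forall s : nat -> V,
    (forall e : R, 0 < e -> exists N, forall p q, (N <= p)%N -> (N <= q)%N ->
        hnorm ip (s p - s q) < e) ->
    exists l : V, forall e : R, 0 < e -> exists N, forall p, (N <= p)%N ->
        hnorm ip (s p - l) < e.

Definition lin_operator (R : realType) (V : lmodType R[i]) (Dom : set V) (X : V -> V) :=
  Dom 0 /\
  (forall (a : R[i]) u v, Dom u -> Dom v -> Dom (a *: u + v)) /\
  (forall (a : R[i]) u v, Dom u -> Dom v -> X (a *: u + v) = a *: X u + X v).

Definition hermitian_op (R : realType) (V : lmodType R[i]) (ip : inner_product V)
  (Dom : set V) (X : V -> V) :=
  forall u v, Dom u -> Dom v -> ip (X u) v = ip u (X v).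

Definition skew_hermitian_op (R : realType) (V : lmodType R[i]) (ip : inner_product V)
  (Dom : set V) (X : V -> V) :=
  forall u v, Dom u -> Dom v -> ip (X u) v = - ip u (X v).

Definition common_invariant_domain (V : Type) (n : nat) (Dom : nat -> set V)
  (X : nat -> V -> V) (D : set V) :=
  forall j, (1 <= j <= n)%N -> (forall u, D u -> Dom j u) /\ (forall u, D u -> D (X j u)).

(* M(N): nonempty words over {1,...,N}; alpha = [:: i_1; ...; i_k]. *)
Definition multi_index (N : nat) (a : seq nat) :=
  a != [::] /\ all (fun i => (1 <= i <= N)%N) a.

Fixpoint opw (V : Type) (Y : nat -> V -> V) (a : seq nat) (u : V) : V :=
  match a with
  | [::] => u
  | i :: a' => Y i (opw Y a' u)
  end.

Fixpoint in_dom (V : Type) (Dom : nat -> set V) (Y : nat -> V -> V) (a : seq nat) (u : V) : Prop :=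
  match a with
  | [::] => True
  | i :: a' => in_dom Dom Y a' u /\ Dom i (opw Y a' u)
  end.

Definition Cinf (V : Type) (N : nat) (Dom : nat -> set V) (Y : nat -> V -> V) (u : V) :=
  forall a, multi_index N a -> in_dom Dom Y a u.

Definition pw (R : realType) (N : nat) (p : nat -> nat -> R) (a : seq nat) : R :=
  \prod_(1 <= j < N.+1) p j (count_mem j a).

Definition Sclass (R : realType) (V : lmodType R[i]) (ip : inner_product V) (N : nat)
  (Dom : nat -> set V) (Y : nat -> V -> V) (p : nat -> nat -> R) (u : V) :=
  Cinf N Dom Y u /\
  exists A C : R, 0 < A /\ 0 < C /\
    forall a, multi_index N a ->
      hnorm ip (opw Y a u) <= C * A ^+ size a * pw N p a.

Definition condA0 (R : realType) (m : nat -> R) := m 0%N = 1 /\ m 1%N = 1.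
Definition condA1 (R : realType) (m : nat -> R) :=
  forall p, (1 <= p)%N -> m p ^+ 2 <= m p.-1 * m p.+1.
Definition condA2 (R : realType) (n : nat) (m : nat -> nat -> R) :=
  exists H : R, 0 < H /\ forall j, (1 <= j <= n)%N -> forall p q,
      m j (p + q)%N <= H ^+ (p + q) * m j p * m j q.
Definition condA3 (R : realType) (mj mk : nat -> R) :=
  exists L : R, 1 <= L /\ forall p, (1 <= p)%N ->
      p%:R * mj p.-1 * mk p.-1 <= L * mj p * mk p.

From HB Require Import structures.
From mathcomp Require Import all_boot all_order all_algebra.
From mathcomp Require Import classical_sets reals.
From mathcomp Require Import complex.
From mathcomp Require Import ring lra zify.
Import Order.TTheory GRing.Theory Num.Theory.
Local Open Scope ring_scope.
Set Implicit Arguments. Unset Strict Implicit. Unset Printing Implicit Defensive.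

(* Only the converse implication needs work.  As <u, X_(rev a) X_a u> equals ||X_a u||^2
   up to a unimodular factor, it suffices to bound |<u, X_w u>| for every word w.  A letter
   X_j (j < n) standing just before a block X_n^(t+1) is moved past it; since [X_j, X_n] is
   the scalar c_j this creates one extra word, with one X_j and one X_n deleted, weighted
   by (t+1) c_j.  Iterating ends at words X_n^s X_d with no X_n in d, where
   |<X_n^s u, X_d u>| <= ||X_n^s u|| ||X_d u|| is controlled by the two hypotheses.
   Each deletion multiplies m_w by rho_j rho_n, where rho = m_(p-1)/m_p is nonincreasing by
   (A1) and (A3) reads p rho_j(p) rho_n(p) <= L; together they pay for the factor (t+1)
   up to the bookkeeping done by the weight
   prod_i 2^a C(k+a, a) (a = letters X_i with an X_n to their right, k = number of X_n),
   which absorbs the recursion of the moves and is at most 4^((n-1)|w|); finally (A2)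
   compares m over rev a ++ a with m_a^2. *)

Section InnerProduct.
Local Open Scope complex_scope.
Variables (R : realType) (V : lmodType R[i]) (ip : inner_product V).

Lemma ip0l v : ip 0 v = 0.
Proof.
have := ip_linl ip 1 0 0 v; rewrite scale1r addr0 mul1r => h.
by apply: (@addrI _ (ip 0 v)); rewrite addr0 -h.
Qed.

Lemma ip0r v : ip v 0 = 0.
Proof. by rewrite ip_conj ip0l conjc0. Qed.

Lemma ipDr a w x y : ip w (a *: x + y) = conjc a * ip w x + ip w y.
Proof. by rewrite [LHS]ip_conj ip_linl rmorphD rmorphM /= -!ip_conj. Qed.

Lemma ipBl a x y w : ip (x - a *: y) w = ip x w - a * ip y w.
Proof. by rewrite addrC -scaleNr ip_linl mulNr addrC. Qed.

Lemma ipBr a w x y : ip w (x - a *: y) = ip w x - conjc a * ip w y.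
Proof. by rewrite addrC -scaleNr ipDr rmorphN mulNr addrC. Qed.

Lemma ger0_ReE (z : R[i]) : 0 <= z -> z = (complex.Re z)%:C.
Proof. by case: z => a b /ger0_Im /= ->. Qed.

Lemma normC_ReE (z : R[i]) : `|z| = (complex.Re `|z|)%:C.
Proof. exact/ger0_ReE/normr_ge0. Qed.

Lemma hnorm_ge0 x : 0 <= hnorm ip x.
Proof. exact: sqrtr_ge0. Qed.

Lemma hnorm_sqrC x : (hnorm ip x ^+ 2)%:C = ip x x.
Proof.
have ge0 := ip_ge0 ip x.
rewrite /hnorm sqr_sqrtr -?ger0_ReE //.
by move: ge0; rewrite lecE => /andP[].
Qed.

Lemma normC_ip_sqr_le x y : `|ip x y| ^+ 2 <= ip x x * ip y y.
Proof.
have [yy0|yy_neq0] := eqVneq (ip y y) 0.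
  by rewrite (ip_eq0 yy0) !ip0r normr0 expr0n mulr0.
have yy_gt0 : 0 < ip y y by rewrite lt_def yy_neq0 ip_ge0.
have yyJ : conjc (ip y y) = ip y y by rewrite [ip y y]ger0_ReE ?ip_ge0 // conjc_real.
set t := ip x y / ip y y.
have tJ : conjc t = conjc (ip x y) / ip y y by rewrite rmorphM /= conjc_inv yyJ.
have := ip_ge0 ip (x - t *: y).
rewrite ipBl !ipBr [ip y x]ip_conj tJ sqr_normc.
have -> : ip x x - conjc (ip x y) / ip y y * ip x y -
    t * (conjc (ip x y) - conjc (ip x y) / ip y y * ip y y)
    = ip x x - ip x y * conjc (ip x y) / ip y y by rewrite /t; field.
by rewrite subr_ge0 ler_pdivrMr.
Qed.

Lemma normC_ip_le x y : `|ip x y| <= (hnorm ip x * hnorm ip y)%:C.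
Proof.
have ge0 : 0 <= (hnorm ip x * hnorm ip y)%:C by rewrite ler0c mulr_ge0 ?sqrtr_ge0.
rewrite -(@ler_pXn2r _ 2) ?nnegrE ?normr_ge0 //.
have -> : (hnorm ip x * hnorm ip y)%:C ^+ 2 = ip x x * ip y y.
  by rewrite -!hnorm_sqrC -rmorphM -rmorphXn exprMn.
exact: normC_ip_sqr_le.
Qed.

End InnerProduct.

Lemma ex_ub_family (R : realDomainType) (I : eqType) (P : I -> R -> Prop)
    (r : seq I) (c0 : R) :
  (forall i c c', P i c -> c <= c' -> P i c') ->
  (forall i, i \in r -> exists c, P i c) ->
  exists c, c0 <= c /\ forall i, i \in r -> P i c.
Proof.
move=> Pmono; elim: r => [_|i r IH Pr]; first by exists c0.
have [ci Pci] := Pr i (mem_head i r).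
have [c [c0c Pc]] := IH (fun j jr => Pr j (mem_behead (s := i :: r) jr)).
exists (Num.max c ci); split; first by rewrite le_max c0c.
move=> j; rewrite in_cons => /predU1P[->|jr]; first by apply: Pmono Pci _; rewrite le_max lexx orbT.
by apply: Pmono (Pc j jr) _; rewrite le_max lexx.
Qed.

Lemma opw_cat (T : Type) (Y : nat -> T -> T) a b x :
  opw Y (a ++ b) x = opw Y a (opw Y b x).
Proof. by elim: a => //= i a ->. Qed.

Lemma opw_const (T : Type) (Y : nat -> T -> T) j a x :
  opw (fun _ => Y j) a x = opw Y (nseq (size a) j) x.
Proof. by elim: a => //= i a ->. Qed.

Lemma in_dom_const (T : Type) (Dom : nat -> set T) (Y : nat -> T -> T) j a x :
  in_dom (fun _ => Dom j) (fun _ => Y j) a x = in_dom Dom Y (nseq (size a) j) x.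
Proof. by elim: a => //= i a ->; rewrite opw_const. Qed.

Section Words.
Variable n : nat.

Fixpoint active (P : pred nat) (w : seq nat) : nat :=
  if w is x :: w' then ((P x && (n \in w')) + active P w')%N else 0%N.

Lemma active_cat P a b :
  active P (a ++ b) = ((if n \in b then count P a else active P a) + active P b)%N.
Proof.
elim: a => [|x a IH] /=; first by case: (n \in b).
rewrite IH mem_cat; case: (n \in b); rewrite ?orbT ?orbF /=; lia.
Qed.

Lemma active_le_count P w : (active P w <= count P w)%N.
Proof. by elim: w => //= x w IH; case: (P x); case: (n \in w) => /=; lia. Qed.

Lemma active_notin P w : n \notin w -> active P w = 0%N.
Proof.
elim: w => //= x w IH; rewrite in_cons negb_or => /andP[_ h].
by rewrite (negbTE h) andbF IH.
Qed.

Lemma active_nseq P t : ~~ P n -> active P (nseq t n) = 0%N.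
Proof. by move=> Pn; elim: t => //= t ->; rewrite (negbTE Pn). Qed.

Lemma word_normalP w :
  (exists s d, w = nseq s n ++ d /\ n \notin d) \/
  (exists w1 j t d, w = w1 ++ j :: nseq t.+1 n ++ d /\ j != n /\ n \notin d).
Proof.
elim: w => [|x w [[s [d [-> nd]]]|[w1 [j [t [d [-> [jn nd]]]]]]]].
- by left; exists 0%N, [::].
- have [->|xn] := eqVneq x n; first by left; exists s.+1, d.
  case: s => [|s]; last by right; exists [::], x, s, d.
  by left; exists 0%N, (x :: d); rewrite in_cons negb_or eq_sym xn.
- by right; exists (x :: w1), j, t, d.
Qed.

Lemma active_normal P s d : ~~ P n -> n \notin d -> active P (nseq s n ++ d) = 0%N.
Proof. by move=> Pn nd; rewrite active_cat (negbTE nd) active_nseq // active_notin. Qed.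

Lemma active_unordered P w1 j t d : ~~ P n -> n \notin d ->
  active P (w1 ++ j :: nseq t.+1 n ++ d) = (count P w1 + P j)%N.
Proof.
move=> Pn nd; rewrite active_cat in_cons mem_cat mem_nseq eqxx orbT /=.
rewrite mem_cat mem_nseq eqxx /= andbT.
by rewrite in_cons eqxx (negbTE Pn) andbT active_normal // !addn0.
Qed.

Lemma active_swapped P w1 j t d : ~~ P n -> j != n -> n \notin d ->
  active P (w1 ++ nseq t.+1 n ++ j :: d) = count P w1.
Proof.
move=> Pn jn nd; rewrite active_cat mem_cat mem_nseq eqxx /= active_cat.
rewrite in_cons eq_sym (negbTE jn) (negbTE nd) active_nseq //=.
by rewrite (negbTE Pn) (negbTE nd) andbF active_notin // !addn0.
Qed.

Lemma active_contracted P w1 t d : ~~ P n -> n \notin d ->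
  (active P (w1 ++ nseq t n ++ d) <= count P w1)%N.
Proof.
move=> Pn nd; rewrite active_cat active_normal // addn0.
by case: ifP => _ //; apply: active_le_count.
Qed.
End Words.

Definition rho (R : realType) (mj : nat -> R) p := mj p.-1 / mj p.

Lemma rho_ge0 (R : realType) (ml : nat -> R) p : (forall p, 0 < ml p) -> 0 <= rho ml p.
Proof. by move=> ml_gt0; rewrite divr_ge0 ?ltW. Qed.

Lemma rho_nonincr (R : realType) (ml : nat -> R) p q : (forall p, 0 < ml p) -> condA1 ml ->
  (1 <= p <= q)%N -> rho ml q <= rho ml p.
Proof.
move=> ml_gt0 mlA1 /andP[p1 pq]; rewrite -(prednK p1) -(prednK (leq_trans p1 pq)).
have step i : rho ml i.+2 <= rho ml i.+1.
  rewrite /rho /= ler_pdivrMr // mulrAC ler_pdivlMr // -expr2.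
  exact: mlA1.
apply: (homo_leq (f := fun i => rho ml i.+1) (r := fun x y => y <= x)) => //.
- by move=> ? ? ? /[swap]; apply: le_trans.
- by rewrite -ltnS !prednK // (leq_trans p1).
Qed.

Section RhoPair.
Variables (R : realType) (mj mk : nat -> R) (L : R).
Hypotheses (mj_gt0 : forall p, 0 < mj p) (mk_gt0 : forall p, 0 < mk p).
Hypotheses (mjA1 : condA1 mj) (mkA1 : condA1 mk).
Hypothesis L_ge0 : 0 <= L.
Hypothesis rhoA3 : forall p, (1 <= p)%N -> p%:R * rho mj p * rho mk p <= L.

Lemma rho_pair_le b q k : (1 <= q)%N -> (1 <= k)%N -> (b <= q)%N ->
  b%:R * k%:R * rho mj q * rho mk k <= L * (b + k)%:R.
Proof.
move=> q1 k1 bq.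
have [gj gk] := (rho_ge0 q mj_gt0, rho_ge0 k mk_gt0).
rewrite natrD mulrDr; have [kq|qk] := leqP k q.
  have rj : rho mj q <= rho mj k by apply: rho_nonincr => //; rewrite k1.
  have := ler_wpM2l (ler0n R b) (rhoA3 k1).
  have : 0 <= L * k%:R by rewrite mulr_ge0.
  have : b%:R * k%:R * rho mj q * rho mk k <= b%:R * k%:R * rho mj k * rho mk k.
    by rewrite ler_wpM2r // ler_wpM2l ?mulr_ge0.
  lra.
have rk : rho mk k <= rho mk q by apply: rho_nonincr => //; rewrite q1 ltnW.
have := ler_wpM2l (ler0n R k) (rhoA3 q1).
have : 0 <= L * b%:R by rewrite mulr_ge0.
have : b%:R * k%:R * rho mj q * rho mk k <= q%:R * k%:R * rho mj q * rho mk q.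
  apply: ler_pM => //; first by apply: mulr_ge0 => //; apply: mulr_ge0.
  by rewrite ler_wpM2r // ler_wpM2r // ler_nat.
lra.
Qed.

End RhoPair.

Lemma bin_le_exp2 k a : ('C(k, a) <= 2 ^ k)%N.
Proof.
elim: k a => [|k IH] [|a] //; first by rewrite bin0 expn_gt0.
by rewrite binS expnS mul2n -addnn leq_add.
Qed.

HB.lock Definition bin_weight a k := (2 ^ a * 'C(k + a, a))%N.

Lemma bin_weight_mono a a' k k' : (a <= a')%N -> (k <= k')%N ->
  (bin_weight a k <= bin_weight a' k')%N.
Proof.
move=> aa kk; rewrite unlock leq_mul ?leq_pexp2l //.
apply: (@leq_trans 'C(k' + a, a)); first by rewrite leq_bin2l // leq_add2r.
rewrite -(bin_sub (leq_addl k' a)) -(bin_sub (leq_addl k' a')) !addnK.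
by rewrite leq_bin2l // leq_add2l.
Qed.

Lemma bin_weight_le a k : (bin_weight a k <= 4 ^ (a + k))%N.
Proof.
rewrite unlock (_ : 4 = 2 ^ 2)%N // -expnM.
apply: (leq_trans (leq_mul (leqnn _) (bin_le_exp2 _ _))).
by rewrite -expnD leq_pexp2l //; lia.
Qed.

Lemma mul_bin_weightS a k :
  (a.+1 * bin_weight a.+1 k = 2 * (a.+1 + k) * bin_weight a k)%N.
Proof.
rewrite unlock expnS mulnCA -mul_bin_diag addnS /= !mulnA; congr (_ * _)%N.
by rewrite mulnAC [(k + a)%N]addnC.
Qed.

Lemma bin_weight_step (R : realFieldType) (s x : R) a k :
  0 <= s -> 0 <= x -> a.+1%:R * x <= (a.+1 + k)%:R * s ->
  s * (bin_weight a k)%:R + x * (bin_weight a k.-1)%:R <= s * (bin_weight a.+1 k)%:R.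
Proof.
move=> s0 x0 xs; set B := (bin_weight a k)%:R.
have B0 : 0 <= B by [].
have B'B : (bin_weight a k.-1)%:R <= B by rewrite ler_nat bin_weight_mono // leq_pred.
have eS : a.+1%:R * (bin_weight a.+1 k)%:R = 2 * (a.+1 + k)%:R * B :> R.
  by rewrite -!natrM mul_bin_weightS.
rewrite -(ler_pM2l (ltr0Sn R a)) mulrDr [X in _ <= X]mulrCA eS.
have := ler_wpM2r B0 xs; have := ler_wpM2l (ler0n R a.+1) (ler_wpM2l x0 B'B).
have : a.+1%:R * s * B <= (a.+1 + k)%:R * s * B.
  by rewrite ler_wpM2r // ler_wpM2r // ler_nat leq_addr.
lra.
Qed.

Section Weights.
Variables (R : realType) (n : nat) (m : nat -> nat -> R).
Hypothesis m_gt0 : forall j, (1 <= j <= n)%N -> forall p, 0 < m j p.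

Lemma pw_ge0 a : 0 <= pw n m a.
Proof.
rewrite /pw big_seq; apply: prodr_ge0 => j; rewrite mem_index_iota ltnS => jn.
exact/ltW/m_gt0.
Qed.

Lemma pw_perm a b : perm_eq a b -> pw n m a = pw n m b.
Proof. by move=> /permP ab; apply: eq_bigr => j _; rewrite ab. Qed.

Lemma pw_cons j b : (1 <= j <= n)%N ->
  pw n m b = pw n m (j :: b) * rho (m j) (count_mem j (j :: b)).
Proof.
move=> jn; have jr : j \in index_iota 1 n.+1 by rewrite mem_index_iota ltnS.
rewrite /pw !(bigD1_seq j) ?iota_uniq //= eqxx add1n.
under [X in _ = _ * X * _]eq_bigr => i ij do rewrite eq_sym (negbTE ij).
by rewrite /rho /=; field; rewrite gt_eqF ?m_gt0.
Qed.

Lemma pw_contract j b : (1 <= j < n)%N ->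
  pw n m b = pw n m [:: j, n & b] * rho (m j) (count_mem j [:: j, n & b])
                                  * rho (m n) (count_mem n [:: j, n & b]).
Proof.
case/andP=> j1 jn; have jn' : (1 <= j <= n)%N by rewrite j1 ltnW.
have nn : (1 <= n <= n)%N by rewrite leqnn (leq_trans j1) // ltnW.
rewrite {1}(pw_cons b nn) (pw_cons _ jn').
by rewrite [count_mem n [:: j, n & b]]/= (ltn_eqF jn).
Qed.

Lemma pw_recr a : (1 <= n)%N -> pw n m a = pw n.-1 m a * m n (count_mem n a).
Proof. by move=> n1; rewrite /pw -{1 3}(prednK n1) big_nat_recr //= prednK. Qed.

Hypothesis m0 : forall j, (1 <= j <= n)%N -> m j 0 = 1.

Lemma pw_shrink a : (1 <= n)%N -> all (fun i => i <= n.-1)%N a -> pw n m a = pw n.-1 m a.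
Proof.
move=> n1 an; have na : n \notin a.
  by apply/negP => /(allP an); rewrite -ltnS prednK // ltnn.
by rewrite pw_recr // (count_memPn na) m0 ?mulr1 // n1 leqnn.
Qed.

Lemma pw_normal s d : (1 <= n)%N -> n \notin d ->
  pw n m (nseq s n ++ d) = m n s * pw n m d.
Proof.
move=> n1 nd; rewrite !pw_recr // count_cat count_nseq /= eqxx mul1n.
rewrite (count_memPn nd) addn0 m0 ?n1 ?leqnn // mulr1 mulrC; congr (_ * _).
apply: eq_big_nat => j /andP[_ jn]; rewrite count_cat count_nseq /=.
by rewrite (_ : (n == j) = false) // gtn_eqF // -(prednK n1).
Qed.

Lemma pw_nil : pw n m [::] = 1.
Proof. by rewrite /pw big_nat big1 // => j; rewrite ltnS => /m0. Qed.

Lemma pw_nseq s : (1 <= n)%N -> pw n m (nseq s n) = m n s.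
Proof. by move=> n1; rewrite -[nseq s n]cats0 pw_normal // pw_nil mulr1. Qed.

Lemma pw_rev_cat (H : R) a : 1 <= H ->
  (forall j, (1 <= j <= n)%N -> forall p q, m j (p + q) <= H ^+ (p + q) * m j p * m j q) ->
  pw n m (rev a ++ a) <= (H ^+ (2 * size a)) ^+ n * pw n m a ^+ 2.
Proof.
move=> H1 mA2; have H0 : 0 <= H by apply: le_trans H1.
apply: (@le_trans _ _
  (\prod_(1 <= j < n.+1) (H ^+ (2 * size a) * m j (count_mem j a) ^+ 2))).
  rewrite /pw big_seq [X in _ <= X]big_seq; apply: ler_prod => j.
  rewrite mem_index_iota ltnS => jn; rewrite ltW ?m_gt0 //=.
  rewrite count_cat count_rev expr2 mulrA.
  apply: le_trans (mA2 j jn _ _) _.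
  have mj0 p : 0 <= m j p by exact/ltW/m_gt0.
  rewrite !ler_wpM2r //; apply: ler_weXn2l => //.
  by rewrite mul2n -addnn leq_add ?count_size.
by rewrite big_split /= prodr_const_nat subn1 prodrXl.
Qed.

End Weights.

Definition word_over n (w : seq nat) := all (fun i => (1 <= i <= n)%N) w.

Definition reorder_weight n w :=
  (\prod_(1 <= i < n) bin_weight (active n (pred1 i) w) (count_mem n w))%N.

Lemma reorder_weightE n j w : (1 <= j < n)%N ->
  reorder_weight n w = (bin_weight (active n (pred1 j) w) (count_mem n w) *
    \prod_(1 <= i < n | i != j) bin_weight (active n (pred1 i) w) (count_mem n w))%N.
Proof. by move=> jn; rewrite /reorder_weight (bigD1_seq j) ?iota_uniq ?mem_index_iota. Qed.

Section ReorderStep.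
Variables (n : nat) (w1 d : seq nat) (j t : nat).
Hypotheses (jn : (1 <= j < n)%N) (nd : n \notin d).

Local Notation w := (w1 ++ j :: nseq t.+1 n ++ d).
Local Notation w' := (w1 ++ nseq t.+1 n ++ j :: d).
Local Notation w'' := (w1 ++ nseq t n ++ d).
Local Notation k := (count_mem n w).
Local Notation other :=
  (\prod_(1 <= i < n | i != j) bin_weight (active n (pred1 i) w) k)%N.

Lemma perm_reorder : perm_eq w w'.
Proof. by rewrite perm_cat2l -cat1s perm_catCA. Qed.

Lemma perm_contract : perm_eq w [:: j, n & w''].
Proof.
rewrite -cat1s perm_catCA /= perm_cons.
by rewrite -cat1s perm_catCA.
Qed.

Let nPn i : (1 <= i < n)%N -> ~~ pred1 i n.
Proof. by case/andP => _ lt_in; rewrite /= gtn_eqF. Qed.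

Let active_other i : (1 <= i < n)%N -> i != j ->
  active n (pred1 i) w = count (pred1 i) w1.
Proof. by move=> ir ij; rewrite (active_unordered _ _ _ (nPn ir)) //= eq_sym (negbTE ij) addn0. Qed.

Lemma reorder_weight_unordered :
  reorder_weight n w = (bin_weight (count (pred1 j) w1).+1 k * other)%N.
Proof.
by rewrite (reorder_weightE _ jn) (active_unordered _ _ _ (nPn jn)) // [pred1 j j]/= eqxx addn1.
Qed.

Let count_swapped i : count_mem i w' = count_mem i w.
Proof. by rewrite (permP perm_reorder). Qed.

Let count_contracted i : count_mem i w = ((j == i) + (n == i) + count_mem i w'')%N.
Proof. by rewrite (permP perm_contract) /= addnA. Qed.

Lemma count_lt_unordered : (count_mem j w1 < count_mem j w)%N.
Proof. by rewrite count_cat /= eqxx add1n addnS ltnS leq_addr. Qed.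

Lemma nseq_lt_count : (t < k)%N.
Proof.
rewrite count_cat /= count_cat count_nseq /= eqxx mul1n add1n !addnS !ltnS.
apply: (leq_trans (leq_addr (count_mem n d) t)).
by apply: (leq_trans (leq_addl (j == n) _)); apply: leq_addl.
Qed.

Lemma reorder_weight_swapped :
  reorder_weight n w' = (bin_weight (count (pred1 j) w1) k * other)%N.
Proof.
have jn' : j != n by rewrite ltn_eqF //; case/andP: jn.
rewrite (reorder_weightE _ jn) (count_swapped n) (active_swapped _ _ (nPn jn)) //.
congr (_ * _)%N; rewrite big_seq_cond [RHS]big_seq_cond.
apply: eq_bigr => i /andP[ir ij].
rewrite mem_index_iota in ir.
by rewrite (active_swapped _ _ (nPn ir)) // active_other.
Qed.

Lemma reorder_weight_contracted :
  (reorder_weight n w'' <= bin_weight (count (pred1 j) w1) k.-1 * other)%N.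
Proof.
have kE : count_mem n w'' = k.-1.
  by rewrite count_contracted eqxx ltn_eqF //; case/andP: jn.
rewrite (reorder_weightE _ jn) kE leq_mul //.
  by rewrite bin_weight_mono // (active_contracted _ _ (nPn jn)).
rewrite big_seq_cond [X in (_ <= X)%N]big_seq_cond.
apply: leq_prod => i /andP[ir ij].
rewrite mem_index_iota in ir.
rewrite bin_weight_mono ?leq_pred // active_other //.
exact: (active_contracted _ _ (nPn ir)).
Qed.

End ReorderStep.

Lemma reorder_weight_normal n s d : n \notin d -> reorder_weight n (nseq s n ++ d) = 1%N.
Proof.
move=> nd; rewrite /reorder_weight big_nat big1 // => i /andP[_ lt_in].
by rewrite active_normal ?unlock ?bin0 //= gtn_eqF.
Qed.

Section ReorderBound.
Variables (R : realType) (n : nat) (m : nat -> nat -> R) (L c lam K : R).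
Hypothesis m_gt0 : forall j, (1 <= j <= n)%N -> forall p, 0 < m j p.
Hypothesis mA1 : forall j, (1 <= j <= n)%N -> condA1 (m j).
Hypothesis rhoA3 : forall j, (1 <= j < n)%N -> forall p, (1 <= p)%N ->
  p%:R * rho (m j) p * rho (m n) p <= L.
Hypotheses (L_ge0 : 0 <= L) (c_ge0 : 0 <= c) (lam_ge0 : 0 <= lam) (K_ge0 : 0 <= K).
Hypothesis cL : c * L <= lam ^+ 2.

Lemma reorder_coef_le j a q t k : (1 <= j < n)%N -> (a < q)%N -> (t < k)%N ->
  a.+1%:R * (t.+1%:R * c * rho (m j) q * rho (m n) k) <= (a.+1 + k)%:R * lam ^+ 2.
Proof.
move=> jn aq tk; have [j1 /ltnW jn'] := andP jn.
have jj : (1 <= j <= n)%N by rewrite j1.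
have nn : (1 <= n <= n)%N by rewrite leqnn (leq_trans j1).
have pair := rho_pair_le (m_gt0 jj) (m_gt0 nn) (mA1 jj) (mA1 nn) L_ge0 (rhoA3 jn)
  (leq_ltn_trans (leq0n a) aq) (leq_ltn_trans (leq0n t) tk) aq.
have rr := mulr_ge0 (rho_ge0 q (m_gt0 jj)) (rho_ge0 k (m_gt0 nn)).
have tk' : a.+1%:R * t.+1%:R * rho (m j) q * rho (m n) k
    <= a.+1%:R * k%:R * rho (m j) q * rho (m n) k :> R.
  by rewrite -mulrA -[X in _ <= X]mulrA ler_wpM2r // ler_wpM2l // ler_nat.
have := ler_wpM2l c_ge0 (le_trans tk' pair).
have := ler_wpM2r (ler0n R (a.+1 + k)) cL.
lra.
Qed.

Variable g : seq nat -> R.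
Hypothesis g_reorder : forall w1 j t d, word_over n w1 -> (1 <= j < n)%N ->
  word_over n d -> n \notin d ->
  g (w1 ++ j :: nseq t.+1 n ++ d) <=
    g (w1 ++ nseq t.+1 n ++ j :: d) + t.+1%:R * c * g (w1 ++ nseq t n ++ d).
Hypothesis g_normal : forall s d, word_over n d -> n \notin d ->
  g (nseq s n ++ d) <= K * lam ^+ (s + size d) * pw n m (nseq s n ++ d).

Let bound w := K * lam ^+ size w * pw n m w * (reorder_weight n w)%:R.

Lemma pw_contracted w1 j t d : (1 <= j < n)%N ->
  pw n m (w1 ++ nseq t n ++ d) = pw n m (w1 ++ j :: nseq t.+1 n ++ d) *
    rho (m j) (count_mem j (w1 ++ j :: nseq t.+1 n ++ d)) *
    rho (m n) (count_mem n (w1 ++ j :: nseq t.+1 n ++ d)).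
Proof.
move=> jn; have pc := perm_contract n w1 d j t.
by rewrite (pw_contract m_gt0 _ jn) -(pw_perm _ _ pc) -!(permP pc).
Qed.

Lemma reorder_bound_step w1 j t d : word_over n w1 -> (1 <= j < n)%N ->
    word_over n d -> n \notin d ->
  g (w1 ++ nseq t.+1 n ++ j :: d) <= bound (w1 ++ nseq t.+1 n ++ j :: d) ->
  g (w1 ++ nseq t n ++ d) <= bound (w1 ++ nseq t n ++ d) ->
  g (w1 ++ j :: nseq t.+1 n ++ d) <= bound (w1 ++ j :: nseq t.+1 n ++ d).
Proof.
move=> w1n jn dn nd g' g''.
set w := w1 ++ j :: nseq t.+1 n ++ d; set w'' := w1 ++ nseq t n ++ d.
set a := count_mem j w1; set k := count_mem n w; set q := count_mem j w.
set other := (\prod_(1 <= i < n | i != j) bin_weight (active n (pred1 i) w) k)%N.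
have [j1 /ltnW jle] := andP jn.
have jj : (1 <= j <= n)%N by rewrite j1 jle.
have nn : (1 <= n <= n)%N by rewrite leqnn (leq_trans j1).
have t1c_ge0 := mulr_ge0 (ler0n R t.+1) c_ge0.
have rho2_ge0 := mulr_ge0 (rho_ge0 q (m_gt0 jj)) (rho_ge0 k (m_gt0 nn)).
have x_ge0 := mulr_ge0 (mulr_ge0 t1c_ge0 (rho_ge0 q (m_gt0 jj))) (rho_ge0 k (m_gt0 nn)).
have Kpw_ge0 : 0 <= K * lam ^+ size w'' * pw n m w.
  by rewrite mulr_ge0 ?(pw_ge0 m_gt0) // mulr_ge0 // exprn_ge0.
have pc := perm_contract n w1 d j t; have pr := perm_reorder n w1 d j t.
have bound_w : bound w = K * lam ^+ (size w'').+2 * pw n m w *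
    (bin_weight a.+1 k * other)%:R.
  by rewrite /bound (perm_size pc) (reorder_weight_unordered _ _ jn nd).
have bound_w' : bound (w1 ++ nseq t.+1 n ++ j :: d) =
    K * lam ^+ (size w'').+2 * pw n m w * (bin_weight a k * other)%:R.
  by rewrite /bound -(perm_size pr) (perm_size pc) -(pw_perm _ _ pr)
    (reorder_weight_swapped _ _ jn nd).
have bound_w'' : bound w'' <= K * lam ^+ size w'' * pw n m w *
    (rho (m j) q * rho (m n) k * (bin_weight a k.-1 * other)%:R).
  have -> : bound w'' = K * lam ^+ size w'' * pw n m w *
      (rho (m j) q * rho (m n) k * (reorder_weight n w'')%:R).
    by rewrite /bound (pw_contracted _ _ _ jn); ring.
  by rewrite ler_wpM2l // ler_wpM2l ?ler_nat ?reorder_weight_contracted.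
apply: (le_trans (g_reorder t w1n jn dn nd)).
apply: (le_trans (lerD g' (ler_wpM2l t1c_ge0 g''))).
apply: (le_trans (lerD (lexx _) (ler_wpM2l t1c_ge0 bound_w''))).
rewrite bound_w bound_w'.
have := ler_wpM2l (mulr_ge0 Kpw_ge0 (ler0n R other)) (bin_weight_step (sqr_ge0 lam) x_ge0
  (reorder_coef_le jn (@count_lt_unordered n w1 d j t) (@nseq_lt_count n w1 d j t))).
rewrite !natrM !exprS; lra.
Qed.

Lemma reorder_bound w : word_over n w -> g w <= bound w.
Proof.
(* A move lowers the number of active letters, a deletion the length. *)
have [N] := ubnP (size w + active n (predC1 n) w).
elim: N w => // N IH w; have [[s [d [-> nd]]]|[w1 [j [t [d [-> [jn nd]]]]]]] := word_normalP n w.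
  move=> _; rewrite /word_over all_cat => /andP[_ dn].
  by rewrite /bound reorder_weight_normal // mulr1 size_cat size_nseq g_normal.
rewrite ltnS /word_over all_cat => size_lt /andP[w1n].
rewrite /= all_cat => /and3P[j1n _ /andP[_ dn]].
have jlt : (1 <= j < n)%N by case/andP: j1n => -> jle; rewrite ltn_neqAle jn.
have nPn : ~~ predC1 n n by rewrite /= eqxx.
have nn : (1 <= n <= n)%N by case/andP: jlt => j1 /ltnW jle; rewrite leqnn (leq_trans j1).
move: size_lt; rewrite (active_unordered _ _ _ nPn nd) /= jn addn1 => size_lt.
apply: reorder_bound_step => //; apply: IH.
- by rewrite (active_swapped _ _ nPn jn nd) -(perm_size (perm_reorder n w1 d j t)) -addnS.
- by rewrite /word_over !all_cat /= all_nseq j1n w1n dn nn orbT.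
- apply: leq_ltn_trans (leq_add (leqnn _) (active_contracted _ _ nPn nd)) _.
  move: size_lt; rewrite (perm_size (perm_contract n w1 d j t)) /=.
  by move/(leq_trans _); apply; rewrite !addSn !ltnS addnS leqW.
- by rewrite /word_over !all_cat all_nseq w1n dn nn orbT.
Qed.

End ReorderBound.

(* The norm on [R[i]] is [R[i]]-valued, hence the real part. *)
Definition word_coef (R : realType) (V : lmodType R[i]) (ip : inner_product V)
  (X : nat -> V -> V) (u : V) (w : seq nat) : R := complex.Re `|ip u (opw X w u)|.

Section Operators.
Local Open Scope complex_scope.
Variables (R : realType) (V : lmodType R[i]) (ip : inner_product V)
  (n : nat) (Dom : nat -> set V) (X : nat -> V -> V) (D : set V).
Hypothesis X_lin : forall j, (1 <= j <= n)%N -> lin_operator (Dom j) (X j).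
Hypothesis X_sym : forall j, (1 <= j <= n)%N ->
  hermitian_op ip (Dom j) (X j) \/ skew_hermitian_op ip (Dom j) (X j).
Hypothesis D_inv : common_invariant_domain n Dom X D.

Lemma opw_in_D w x : word_over n w -> D x -> D (opw X w x).
Proof.
elim: w => //= j w IH /andP[jn wn] Dx.
by have [_ XjD] := D_inv jn; apply/XjD/IH.
Qed.

Lemma in_dom_opw w x : word_over n w -> D x -> in_dom Dom X w x.
Proof.
elim: w => //= j w IH /andP[jn wn] Dx; split; first exact: IH.
by have [DDom _] := D_inv jn; apply/DDom/opw_in_D.
Qed.

Lemma opw_linear w a x y : word_over n w -> D x -> D y ->
  opw X w (a *: x + y) = a *: opw X w x + opw X w y.
Proof.
elim: w => //= j w IH /andP[jn wn] Dx Dy; rewrite IH //.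
have [DDom _] := D_inv jn; have [_ [_ Xjlin]] := X_lin jn.
by apply: Xjlin; apply/DDom/opw_in_D.
Qed.

Lemma normC_ip_opw_rev w x y : word_over n w -> D x -> D y ->
  `|ip (opw X w x) y| = `|ip x (opw X (rev w) y)|.
Proof.
elim: w y => // j w IH y /andP[jn wn] Dx Dy.
have [DDom XjD] := D_inv jn.
rewrite rev_cons -cats1 opw_cat [opw _ (j :: w) _]/= [opw _ [:: j] _]/=.
have Xj_adj : `|ip (X j (opw X w x)) y| = `|ip (opw X w x) (X j y)|.
  case: (X_sym jn) => Xj_sym; rewrite Xj_sym ?normrN //;
  by apply/DDom => //; apply/opw_in_D.
by rewrite Xj_adj IH //; apply: XjD.
Qed.

Section Commutator.
Variables (j : nat) (cj : R[i]).
Hypothesis jn : (1 <= j <= n)%N.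
Hypothesis commute_jn : forall x, D x -> X j (X n x) - X n (X j x) = cj *: x.

Let nn : (1 <= n <= n)%N.
Proof. by case/andP: jn => j1 jle; rewrite leqnn (leq_trans j1). Qed.

Let nseq_over t : word_over n (nseq t n).
Proof. by rewrite /word_over all_nseq nn orbT. Qed.

Lemma commute_nseq t x : D x ->
  X j (opw X (nseq t.+1 n) x) =
    t.+1%:R * cj *: opw X (nseq t n) x + opw X (nseq t.+1 n) (X j x).
Proof.
move=> Dx; have [DDom XnD] := D_inv nn; have [XjDom XjD] := D_inv jn.
have commute y : D y -> X j (X n y) = cj *: y + X n (X j y).
  by move=> Dy; apply/eqP; rewrite -subr_eq commute_jn.
elim: t => [|t IH]; first by rewrite commute // mul1r.
have Dt := opw_in_D (nseq_over t.+1) Dx.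
rewrite [opw X (nseq t.+2 n) _]/= commute // IH.
have [_ [_ Xnlin]] := X_lin nn.
rewrite Xnlin; last 2 first.
- exact/DDom/opw_in_D.
- exact/DDom/opw_in_D/XjD.
by rewrite addrA -scalerDl [t.+2%:R]mulrSr mulrDl mul1r [cj + _]addrC addrC.
Qed.

Lemma opw_reorder w1 t d x : word_over n w1 -> word_over n d -> D x ->
  opw X (w1 ++ j :: nseq t.+1 n ++ d) x =
    t.+1%:R * cj *: opw X (w1 ++ nseq t n ++ d) x + opw X (w1 ++ nseq t.+1 n ++ j :: d) x.
Proof.
move=> w1n dn Dx; have [_ XjD] := D_inv jn; have Dd := opw_in_D dn Dx.
rewrite !opw_cat [opw X (j :: _) _]/= opw_cat commute_nseq // opw_linear //.
- exact: opw_in_D.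
- exact/opw_in_D/XjD.
Qed.

Variables (c : R) (u : V).
Hypotheses (cj_le : `|cj| <= c%:C) (Du : D u).

Lemma word_coef_reorder w1 t d : word_over n w1 -> word_over n d ->
  word_coef ip X u (w1 ++ j :: nseq t.+1 n ++ d) <=
    word_coef ip X u (w1 ++ nseq t.+1 n ++ j :: d) +
    t.+1%:R * c * word_coef ip X u (w1 ++ nseq t n ++ d).
Proof.
move=> w1n dn; rewrite -lecR rmorphD !rmorphM /= rmorph_nat -!normC_ReE.
rewrite opw_reorder // ipDr addrC; apply: (le_trans (ler_normD _ _)).
rewrite lerD2l normrM normcJ normrM normr_nat.
by rewrite ler_wpM2r // ler_wpM2l.
Qed.

End Commutator.

Variable u : V.
Hypothesis Du : D u.

Lemma word_coef_rev_cat a : word_over n a ->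
  word_coef ip X u (rev a ++ a) = hnorm ip (opw X a u) ^+ 2.
Proof.
move=> an; have Dv := opw_in_D an Du.
by rewrite /word_coef opw_cat -normC_ip_opw_rev // ger0_norm ?ip_ge0 // -hnorm_sqrC.
Qed.

Lemma word_coef_normal s d : (1 <= n)%N -> word_over n d ->
  word_coef ip X u (nseq s n ++ d) <= hnorm ip (opw X (nseq s n) u) * hnorm ip (opw X d u).
Proof.
move=> n1 dn; have sn : word_over n (nseq s n) by rewrite /word_over all_nseq n1 leqnn orbT.
have adj := normC_ip_opw_rev sn Du (opw_in_D dn Du); rewrite rev_nseq in adj.
by rewrite -lecR /word_coef -normC_ReE opw_cat -adj normC_ip_le.
Qed.
End Operators.

Lemma reorder_weight_le n w : (reorder_weight n w <= 4 ^ (size w * n.-1))%N.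
Proof.
rewrite /reorder_weight -subn1 expnM -prod_nat_const_nat big_nat [X in (_ <= X)%N]big_nat.
apply: leq_prod => i /andP[_ lt_in]; apply: (leq_trans (bin_weight_le _ _)).
rewrite leq_pexp2l //; apply: (leq_trans (leq_add (active_le_count _ _ _) (leqnn _))).
rewrite -count_predUI [count (predI _ _) _](@eq_count _ _ pred0).
  by rewrite count_pred0 addn0 count_size.
by move=> x /=; case: eqP => // ->; rewrite ltn_eqF.
Qed.

Lemma condA3_rho (R : realType) (mj mk : nat -> R) :
  (forall p, 0 < mj p) -> (forall p, 0 < mk p) -> condA3 mj mk ->
  exists L, forall p, (1 <= p)%N -> p%:R * rho mj p * rho mk p <= L.
Proof.
move=> mj_gt0 mk_gt0 [L [_ mA3]]; exists L => p p1.
have -> : p%:R * rho mj p * rho mk p = p%:R * mj p.-1 * mk p.-1 / (mj p * mk p).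
  by rewrite /rho; field; rewrite !gt_eqF.
by rewrite ler_pdivrMr ?mulr_gt0 // mulrA mA3.
Qed.

Lemma condA2_ge1 (R : realType) n (m : nat -> nat -> R) :
  (forall j, (1 <= j <= n)%N -> forall p, 0 < m j p) -> condA2 n m ->
  exists H, 1 <= H /\ forall j, (1 <= j <= n)%N -> forall p q,
    m j (p + q) <= H ^+ (p + q) * m j p * m j q.
Proof.
move=> m_gt0 [H [H_gt0 mA2]]; exists (Num.max H 1); split => [|j jn p q].
  by rewrite le_max lexx orbT.
have mj0 p' : 0 <= m j p' by exact/ltW/m_gt0.
apply: (le_trans (mA2 j jn p q)); rewrite !ler_wpM2r //.
by apply: lerXn2r; rewrite ?nnegrE ?le_max ?lexx // ltW.
Qed.

Lemma pw_single (R : realType) (p : nat -> R) a : multi_index 1 a ->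
  pw 1 (fun _ => p) a = p (size a).
Proof.
case=> _ a1; rewrite /pw big_nat1; congr p; rewrite -count_predT.
by apply: eq_in_count => i /(allP a1) i1; rewrite /= eqn_leq andbC.
Qed.

Section SubClasses.
Local Open Scope complex_scope.
Variables (R : realType) (V : lmodType R[i]) (ip : inner_product V)
  (n : nat) (Dom : nat -> set V) (X : nat -> V -> V) (m : nat -> nat -> R) (u : V).
Hypothesis n_gt0 : (1 <= n)%N.
Hypothesis m0 : forall j, (1 <= j <= n)%N -> m j 0 = 1.

Lemma Sclass_prefix : Sclass ip n Dom X m u -> Sclass ip n.-1 Dom X m u.
Proof.
have sub a : multi_index n.-1 a -> multi_index n a.
  case=> a0 an; split => //; apply: sub_all an => i /andP[-> /leq_trans]; apply.
  exact: leq_pred.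
case=> Cinf [A [C [A_gt0 [C_gt0 bnd]]]]; split=> [a /sub/Cinf //|].
exists A, C; do 2!split => //; move=> a an.
rewrite -pw_shrink //; first exact/bnd/sub.
by case: an => _; apply: sub_all => i /andP[].
Qed.

Lemma Sclass_last :
  Sclass ip n Dom X m u -> Sclass ip 1 (fun _ => Dom n) (fun _ => X n) (fun _ => m n) u.
Proof.
have nseq_index a : a != [::] -> multi_index n (nseq (size a) n).
  by case: a => // i a _; split => //; rewrite all_nseq n_gt0 leqnn orbT.
case=> Cinf [A [C [A_gt0 [C_gt0 bnd]]]]; split=> [a [a0 _]|].
  by rewrite in_dom_const; apply/Cinf/nseq_index.
exists A, C; do 2!split => //; move=> a a1.
rewrite opw_const pw_single // -(pw_nseq m0) // -[X in A ^+ X](size_nseq (size a) n).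
by apply: bnd; apply: nseq_index; case: a1.
Qed.

End SubClasses.

Section Join.
Local Open Scope complex_scope.
Variables (R : realType) (V : lmodType R[i]) (ip : inner_product V)
  (n : nat) (Dom : nat -> set V) (X : nat -> V -> V) (D : set V) (m : nat -> nat -> R).
Hypothesis n_gt0 : (1 <= n)%N.
Hypothesis X_lin : forall j, (1 <= j <= n)%N -> lin_operator (Dom j) (X j).
Hypothesis X_sym : forall j, (1 <= j <= n)%N ->
  hermitian_op ip (Dom j) (X j) \/ skew_hermitian_op ip (Dom j) (X j).
Hypothesis D_inv : common_invariant_domain n Dom X D.
Hypothesis m_gt0 : forall j, (1 <= j <= n)%N -> forall p, 0 < m j p.
Hypothesis m0 : forall j, (1 <= j <= n)%N -> m j 0 = 1.
Hypothesis mA1 : forall j, (1 <= j <= n)%N -> condA1 (m j).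
Hypothesis mA2 : condA2 n m.
Hypothesis mA3 : forall j, (1 <= j < n)%N -> condA3 (m j) (m n).
Hypothesis X_comm : forall j, (1 <= j < n)%N -> exists c : R[i],
  forall x, D x -> X j (X n x) - X n (X j x) = c *: x.
Variable u : V.
Hypothesis Du : D u.

Let nn : (1 <= n <= n)%N. Proof. by rewrite n_gt0 leqnn. Qed.

Lemma Sclass_split_bounds :
  Sclass ip n.-1 Dom X m u ->
  Sclass ip 1 (fun _ => Dom n) (fun _ => X n) (fun _ => m n) u ->
  exists A C, [/\ 0 <= A, 0 < C,
    forall d, word_over n d -> n \notin d -> hnorm ip (opw X d u) <= C * A ^+ size d * pw n m d
    & forall s, hnorm ip (opw X (nseq s n) u) <= C * A ^+ s * m n s].
Proof.
move=> [_ [A1 [C1 [A1_gt0 [C1_gt0 bnd1]]]]] [_ [A2 [C2 [A2_gt0 [C2_gt0 bnd2]]]]].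
pose A := Num.max A1 A2; pose C := Num.max (Num.max C1 C2) (hnorm ip u).
have [A1A A2A] : A1 <= A /\ A2 <= A by rewrite !le_max !lexx orbT.
have [C1C C2C uC] : [/\ C1 <= C, C2 <= C & hnorm ip u <= C] by rewrite !le_max !lexx !orbT.
have C_gt0 : 0 < C by apply: lt_le_trans C1C.
have le_CA (A' C' : R) k : 0 < A' -> 0 < C' -> A' <= A -> C' <= C ->
    C' * A' ^+ k <= C * A ^+ k.
  move=> A'_gt0 C'_gt0 A'A C'C; have A'_ge0 := ltW A'_gt0.
  apply: ler_pM; rewrite ?exprn_ge0 ?(ltW C'_gt0) //.
  by apply: lerXn2r; rewrite ?nnegrE ?(le_trans A'_ge0 A'A).
exists A, C; split => [|//|d dn nd|s]; first by rewrite le_max ltW.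
- case: d dn nd => [|i d] dn nd; first by rewrite /= expr0 mulr1 (pw_nil m0) mulr1.
  have idn : multi_index n.-1 (i :: d).
    split=> //; apply/allP => k kd; have /andP[k1 kn] := allP dn k kd.
    rewrite k1 -ltnS prednK // ltn_neqAle kn andbT.
    by apply: contraNneq nd => <-.
  apply: (le_trans (bnd1 _ idn)); rewrite -(pw_shrink m0) //; last first.
    by case: idn => _; apply: sub_all => k /andP[].
  by rewrite ler_wpM2r ?(pw_ge0 m_gt0) ?le_CA.
- case: s => [|s]; first by rewrite /= expr0 (m0 nn) !mulr1.
  have s1 : multi_index 1 (nseq s.+1 1%N) by split=> //; rewrite all_nseq orbT.
  have := bnd2 _ s1; rewrite opw_const pw_single // !size_nseq => /le_trans; apply.
  by rewrite ler_wpM2r ?le_CA // ltW ?m_gt0.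
Qed.

Let jn_le j : (1 <= j < n)%N -> (1 <= j <= n)%N.
Proof. by case/andP=> -> /ltnW. Qed.

Lemma uniform_A3 : exists L, 0 <= L /\ forall j, (1 <= j < n)%N ->
  forall p, (1 <= p)%N -> p%:R * rho (m j) p * rho (m n) p <= L.
Proof.
have [|j|L [L_ge0 HL]] := @ex_ub_family _ _
  (fun j L => forall p, (1 <= p)%N -> p%:R * rho (m j) p * rho (m n) p <= L)
  (index_iota 1 n) 0.
- by move=> j L L' HL LL' p p1; apply: le_trans (HL p p1) LL'.
- by rewrite mem_index_iota => jn; apply: condA3_rho (mA3 jn); apply: m_gt0 => //; apply: jn_le.
- by exists L; split=> // j jn; apply: HL; rewrite mem_index_iota.
Qed.

Lemma uniform_commutator : exists c, 0 <= c /\ forall j, (1 <= j < n)%N ->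
  exists cj : R[i], `|cj| <= c%:C /\ forall x, D x -> X j (X n x) - X n (X j x) = cj *: x.
Proof.
have [|j|c [c_ge0 Hc]] := @ex_ub_family _ _
  (fun j c => exists cj : R[i], `|cj| <= c%:C /\
     forall x, D x -> X j (X n x) - X n (X j x) = cj *: x)
  (index_iota 1 n) 0.
- by move=> j c c' [cj [cjc Hcj]] cc'; exists cj; split=> //; apply: le_trans cjc _; rewrite lecR.
- rewrite mem_index_iota => /X_comm[cj Hcj].
  by exists (complex.Re `|cj|), cj; rewrite -normC_ReE.
- by exists c; split=> // j jn; apply: Hc; rewrite mem_index_iota.
Qed.

Lemma word_coef_bound :
  Sclass ip n.-1 Dom X m u ->
  Sclass ip 1 (fun _ => Dom n) (fun _ => X n) (fun _ => m n) u ->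
  exists C lam, [/\ 0 < C, 0 < lam & forall w, word_over n w ->
    word_coef ip X u w <= C ^+ 2 * lam ^+ size w * pw n m w * (reorder_weight n w)%:R].
Proof.
move=> Sprefix Slast.
have [A [C [A_ge0 C_gt0 free_bnd pow_bnd]]] := Sclass_split_bounds Sprefix Slast.
have [L [L_ge0 rhoA3]] := uniform_A3.
have [c [c_ge0 commutator]] := uniform_commutator.
pose lam := A + c * L + 1.
have cL_ge0 : 0 <= c * L by rewrite mulr_ge0.
have lam_ge1 : 1 <= lam by rewrite /lam; lra.
have lam_ge0 : 0 <= lam by apply: le_trans lam_ge1.
have pow_le k : A ^+ k <= lam ^+ k by apply: lerXn2r; rewrite ?nnegrE //; rewrite /lam; lra.
have cL : c * L <= lam ^+ 2.
  by apply: (le_trans (_ : _ <= lam)); [rewrite /lam; lra | rewrite expr2 ler_peMl].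
exists C, lam; split=> //; first exact: lt_le_trans lam_ge1.
apply: (reorder_bound m_gt0 mA1 rhoA3 L_ge0 c_ge0 lam_ge0 (sqr_ge0 C) cL).
  move=> w1 j t d w1n jn dn nd; have [cj [cj_le cj_comm]] := commutator j jn.
  exact: (word_coef_reorder ip X_lin D_inv (jn_le jn) cj_comm cj_le Du).
move=> s d dn nd; apply: (le_trans (word_coef_normal X_sym D_inv Du s n_gt0 dn)).
apply: (le_trans (ler_pM (hnorm_ge0 _ _) (hnorm_ge0 _ _) (pow_bnd s) (free_bnd d dn nd))).
have mpw_ge0 : 0 <= m n s * pw n m d.
  by rewrite mulr_ge0 ?(pw_ge0 m_gt0) // ltW ?m_gt0.
rewrite (pw_normal m0) // exprD.
have -> : C * A ^+ s * m n s * (C * A ^+ size d * pw n m d) =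
  C ^+ 2 * (A ^+ s * A ^+ size d) * (m n s * pw n m d) by ring.
by rewrite ler_wpM2r // ler_wpM2l ?sqr_ge0 // ler_pM ?exprn_ge0.
Qed.

Lemma Sclass_join :
  Sclass ip n.-1 Dom X m u ->
  Sclass ip 1 (fun _ => Dom n) (fun _ => X n) (fun _ => m n) u ->
  Sclass ip n Dom X m u.
Proof.
move=> Sprefix Slast; have [C [lam [C_gt0 lam_gt0 coef_bnd]]] := word_coef_bound Sprefix Slast.
have [H [H_ge1 mA2']] := condA2_ge1 m_gt0 mA2; have H_gt0 := lt_le_trans ltr01 H_ge1.
split=> [a [_ an]|]; first exact: (in_dom_opw D_inv).
exists (lam * H ^+ n * 4%:R ^+ n.-1), C; split; first by rewrite !mulr_gt0 ?exprn_gt0.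
split=> // a [_ an]; set p := pw n m a.
have p_ge0 : 0 <= p by exact: pw_ge0.
have ran : word_over n (rev a ++ a) by rewrite /word_over all_cat all_rev an.
have weight_le :
    (reorder_weight n (rev a ++ a))%:R <= (4%:R ^+ n.-1) ^+ (size a + size a) :> R.
  rewrite -natrX -natrX ler_nat -expnM mulnC.
  by apply: leq_trans (reorder_weight_le _ _) _; rewrite size_cat size_rev.
have sq_bnd : hnorm ip (opw X a u) ^+ 2 <= C ^+ 2 * lam ^+ (size a + size a) *
    ((H ^+ (2 * size a)) ^+ n * p ^+ 2) * (4%:R ^+ n.-1) ^+ (size a + size a).
  rewrite -(word_coef_rev_cat X_sym D_inv Du an).
  apply: (le_trans (coef_bnd _ ran)); rewrite size_cat size_rev.
  have Clam_ge0 : 0 <= C ^+ 2 * lam ^+ (size a + size a).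
    by rewrite mulr_ge0 ?sqr_ge0 // exprn_ge0 // ltW.
  apply: ler_pM => //; first by rewrite mulr_ge0 ?(pw_ge0 m_gt0).
  by rewrite ler_wpM2l ?(pw_rev_cat m_gt0).
rewrite -(@ler_pXn2r _ 2) ?nnegrE ?hnorm_ge0 //; last first.
  by rewrite !mulr_ge0 ?exprn_ge0 ?mulr_ge0 ?exprn_ge0 ?(ltW C_gt0) ?(ltW H_gt0) ?(ltW lam_gt0).
apply: (le_trans sq_bnd); rewrite le_eqVlt; apply/orP; left; apply/eqP.
rewrite -exprM mulnC exprM mul2n -addnn !exprMn !exprD; ring.
Qed.

End Join.

Theorem proposition2p4 (R : realType) (V : lmodType R[i]) (ip : inner_product V)
  (Hcomplete : hilbert_complete ip)
  (n : nat) (Dom : nat -> set V) (X : nat -> V -> V) (D : set V)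
  (m : nat -> nat -> R) :
  (2 <= n)%N ->
  (forall j, (1 <= j <= n)%N -> lin_operator (Dom j) (X j)) ->
  (forall j, (1 <= j <= n)%N ->
     hermitian_op ip (Dom j) (X j) \/ skew_hermitian_op ip (Dom j) (X j)) ->
  common_invariant_domain n Dom X D ->
  (forall j, (1 <= j <= n)%N -> forall p, 0 < m j p) ->
  (forall j, (1 <= j <= n)%N -> condA0 (m j)) ->
  (forall j, (1 <= j <= n)%N -> condA1 (m j)) ->
  condA2 n m ->
  (forall j, (1 <= j < n)%N -> condA3 (m j) (m n)) ->
  (forall j, (1 <= j < n)%N -> exists c : R[i],
      forall u, D u -> X j (X n u) - X n (X j u) = c *: u) ->
  forall u, D u ->
    (Sclass ip n Dom X m u <->
       Sclass ip n.-1 Dom X m u /\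
       Sclass ip 1 (fun _ => Dom n) (fun _ => X n) (fun _ => m n) u).
Proof.
move=> n2 X_lin X_sym D_inv m_gt0 mA0 mA1 mA2 mA3 X_comm u Du.
have n1 : (1 <= n)%N := ltnW n2.
have m0 j : (1 <= j <= n)%N -> m j 0 = 1 by case/mA0.
split=> [S | [Sprefix Slast]]; first by split; [apply: Sclass_prefix | apply: Sclass_last].
exact: (Sclass_join n1 X_lin X_sym D_inv m_gt0 m0 mA1 mA2 mA3 X_comm Du).
Qed.
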